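(* In the setting described in the context, suppose that the nearest neighbour recurrence coefficients satisfy \[ \max_{1\le i\le r}\sup_{\ell\ge0}|a_{\vec n_\ell,i}|<\infty \quad\text{and}\quad \max_{1\le i\le r}\sup_{\vec n\in\mathbb{N}_0^r}|b_{\vec n,i}|<\infty. \] Then the matrix $J$ associated with the path $(\vec n_\ell)$ satisfies $\sup_{|i-j|\le R}|J_{i,j}|<\infty$ for every $R\ge0$.
   Context: Let $r\ge1$ and let $\mu_1,\dots,\mu_r$ be positive Borel measures on $\mathbb{R}$ with all moments finite, forming a perfect system: for every $\vec n\in\mathbb{N}_0^r$ there is a monic polynomial $P_{\vec n}$ of degree $|\vec n|=n_1+\dots+n_r$ with $\int x^kP_{\vec n}\,d\mu_j=0$ for $0\le k\le n_j-1$, $1\le j\le r$. These satisfy the nearest neighbour recurrence relations $xP_{\vec n}(x)=P_{\vec n+\vec e_k}(x)+b_{\vec n,k}P_{\vec n}(x)+\sum_{j=1}^ra_{\vec n,j}P_{\vec n-\vec e_j}(x)$, $1\le k\le r$, with real coefficients $a_{\vec n,j},b_{\vec n,k}$ ($\vec e_j$ the $j$-th unit vector). Fix a path $(\vec n_\ell)_{\ell\ge0}$ with $|\vec n_\ell|=\ell$ and $\vec n_{\ell+1}=\vec n_\ell+\vec e_{i_\ell}$, $i_\ell\in\{1,\dots,r\}$, and set $p_\ell=P_{\vec n_\ell}$. The matrix $J=[J_{\ell,k}]_{\ell,k\ge0}$ is defined by $xp_\ell=\sum_{k=0}^{\ell+1}J_{\ell,k}p_k$, with $J_{\ell,k}=0$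 for $k>\ell+1$. *)

From HB Require Import structures.
From mathcomp Require Import all_boot all_order all_algebra.
From mathcomp Require Import all_classical all_reals all_analysis.
Set Implicit Arguments. Unset Strict Implicit. Unset Printing Implicit Defensive.
Import Order.TTheory GRing.Theory Num.Theory.
Local Open Scope ring_scope.

Definition mindex (r : nat) := {ffun 'I_r -> nat}.

Definition mabs (r : nat) (n : mindex r) : nat := (\sum_(i < r) n i)%N.

(* n + e_k and n - e_k (the latter only used when n k > 0) *)
Definition maddE (r : nat) (n : mindex r) (k : 'I_r) : mindex r :=
  [ffun i => (n i + (i == k))%N].
Definition msubE (r : nat) (n : mindex r) (k : 'I_r) : mindex r :=
  [ffun i => (n i - (i == k))%N].

Definition orthII (R : realType) (r : nat)
  (mu : 'I_r -> {measure set R -> \bar R}) (n : mindex r) (Q : {poly R}) : Prop :=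
  forall (j : 'I_r) (k : nat), (k < n j)%N ->
    (\int[mu j]_x ((x ^+ k * Q.[x])%:E) = 0)%E.

Definition finite_moments (R : realType) (r : nat)
  (mu : 'I_r -> {measure set R -> \bar R}) : Prop :=
  forall (j : 'I_r) (k : nat), (mu j).-integrable setT (fun x : R => (x ^+ k)%:E).

Definition perfect (R : realType) (r : nat)
  (mu : 'I_r -> {measure set R -> \bar R}) : Prop :=
  forall (n : mindex r) (Q : {poly R}), Q != 0 ->
    (size Q <= (mabs n).+1)%N -> orthII mu n Q -> size Q = (mabs n).+1.

Definition is_MOP (R : realType) (r : nat)
  (mu : 'I_r -> {measure set R -> \bar R}) (P : mindex r -> {poly R}) : Prop :=
  forall n : mindex r,
    P n \is monic /\ size (P n) = (mabs n).+1 /\ orthII mu n (P n).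

Definition NNRR (R : realType) (r : nat) (P : mindex r -> {poly R})
  (a b : mindex r -> 'I_r -> R) : Prop :=
  forall (n : mindex r) (k : 'I_r),
    'X * P n = P (maddE n k) + b n k *: P n
               + \sum_(j < r | (0 < n j)%N) a n j *: P (msubE n j).

Definition is_path (r : nat) (np : nat -> mindex r) : Prop :=
  np 0%N = [ffun => 0%N] /\ forall l : nat, exists i : 'I_r, np l.+1 = maddE (np l) i.

Definition is_J (R : realType) (p : nat -> {poly R}) (J : nat -> nat -> R) : Prop :=
  (forall l : nat, 'X * p l = \sum_(k < l.+2) J l k *: p k) /\
  (forall l k : nat, (l.+1 < k)%N -> J l k = 0).

From HB Require Import structures.
From mathcomp Require Import all_boot all_order all_algebra.
From mathcomp Require Import all_classical all_reals all_analysis.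
From mathcomp Require Import zify lra.
(* Along the path, x p_l = p_{l+1} + b p_l + sum_j a_{n_l,j} P_{n_l - e_j}, so row l of
   J has 1 on the superdiagonal, a coefficient b on the diagonal, and below it the
   coordinates of the P_{n_l - e_j} in the basis (p_k)_{k<l}. Comparing the nearest
   neighbour relations for two directions at the same multi-index shows that swapping
   two consecutive steps e_i, e_j changes P only by (b_j - b_i) times a polynomial
   one level lower. Hence, by induction on l, the k-th coordinate of P_{n_l - e_j} is
   at most (1 + 2 sup|b|)^(l-1-k), which is uniformly bounded when l - k <= R. *)

Set Implicit Arguments. Unset Strict Implicit. Unset Printing Implicit Defensive.
Import Order.TTheory GRing.Theory Num.Theory.
Local Open Scope ring_scope.

Lemma mabs_maddE r (n : mindex r) i : mabs (maddE n i) = (mabs n).+1.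
Proof.
rewrite /mabs; under eq_bigr do rewrite ffunE.
rewrite big_split /= -[RHS]addn1; congr (_ + _).
by rewrite (bigD1 i) //= eqxx big1 // => x /negbTE ->.
Qed.

Lemma maddEK r (k : 'I_r) :
  cancel (fun n : mindex r => maddE n k) (fun n => msubE n k).
Proof. by move=> n; apply/ffunP => x; rewrite !ffunE addnK. Qed.

Lemma msubEK r (n : mindex r) k : (0 < n k)%N -> maddE (msubE n k) k = n.
Proof.
move=> nk_gt0; apply/ffunP => x; rewrite !ffunE.
by case: eqP => [->|_]; rewrite ?subnK ?subn0 ?addn0.
Qed.

Lemma msubE_maddE r (n : mindex r) i j : i != j ->
  msubE (maddE n i) j = maddE (msubE n j) i.
Proof.
move=> neq_ij; apply/ffunP => x; rewrite !ffunE.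
by case: (eqVneq x i) => [->|_]; [rewrite (negbTE neq_ij); lia | rewrite !addn0].
Qed.

Lemma degree_basis_coef_eq0 (R : idomainType) (p : nat -> {poly R}) :
  (forall k, size (p k) = k.+1) ->
  forall N (e : nat -> R), \sum_(k < N) e k *: p k = 0 ->
  forall k, (k < N)%N -> e k = 0.
Proof.
move=> size_p; elim=> [//|N IH] e; rewrite big_ord_recr /= => sum0.
have eN0 : e N = 0.
  have lead_pN : (p N)`_N = lead_coef (p N) by rewrite lead_coefE size_p.
  have := congr1 (coefp N) sum0; rewrite /= coef0 coefD coefZ coef_sum big1.
    by rewrite add0r lead_pN => /eqP;
      rewrite mulf_eq0 lead_coef_eq0 -size_poly_eq0 size_p orbF => /eqP.
  by move=> k _; rewrite coefZ nth_default ?mulr0 ?size_p.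
move: sum0; rewrite eN0 scale0r addr0 => /IH eq0 k.
by rewrite ltnS leq_eqVlt => /predU1P[->|/eq0].
Qed.

Lemma is_J_coefE (R : realType) (p : nat -> {poly R}) (J : nat -> nat -> R) :
  (forall k, size (p k) = k.+1) -> is_J p J ->
  forall l (c : nat -> R), 'X * p l = \sum_(k < l.+2) c k *: p k ->
  forall k, (k < l.+2)%N -> J l k = c k.
Proof.
move=> size_p [Jrow _] l c Xpl k lt_k; apply/eqP; rewrite -subr_eq0; apply/eqP.
apply: (degree_basis_coef_eq0 (e := fun k => J l k - c k) size_p _ lt_k).
by under eq_bigr do rewrite scalerBl; rewrite sumrB -Jrow -Xpl subrr.
Qed.

Section PathExpansion.

Variables (R : realType) (r : nat) (P : mindex r -> {poly R}).
Variables (a b : mindex r -> 'I_r -> R) (np : nat -> mindex r).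
Hypothesis size_P : forall n, size (P n) = (mabs n).+1.
Hypothesis recP : NNRR P a b.
Hypothesis path_np : is_path np.

Local Notation p l := (P (np l)).

Lemma mabs_path l : mabs (np l) = l.
Proof.
elim: l => [|l IH].
  by rewrite (proj1 path_np) /mabs big1 // => i _; rewrite ffunE.
by have [i ->] := proj2 path_np l; rewrite mabs_maddE IH.
Qed.

Lemma size_path l : size (p l) = l.+1.
Proof. by rewrite size_P mabs_path. Qed.

Lemma NNRR_maddE_swap c i j :
  P (maddE c i) = P (maddE c j) + (b c j - b c i) *: P c.
Proof.
have := etrans (esym (recP c i)) (recP c j); move/addIr => /(canRL (addrK _)).
by rewrite -addrA -scalerBl.
Qed.

Variable B : R.
Hypothesis B_ge0 : 0 <= B.
Hypothesis b_bounded : forall n i, `|b n i| <= B.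
Local Notation M := (1 + B *+ 2).

Let M_ge1 : 1 <= M. Proof. by rewrite lerDl mulrn_wge0. Qed.
Let M_ge0 : 0 <= M. Proof. exact: le_trans ler01 M_ge1. Qed.

Lemma msubE_path_expansion l j : (0 < np l j)%N -> exists g : nat -> R,
  P (msubE (np l) j) = \sum_(k < l) g k *: p k /\
  forall k, (k < l)%N -> `|g k| <= M ^+ (l.-1 - k).
Proof.
elim: l j => [|l IH] j np_j; first by move: np_j; rewrite (proj1 path_np) ffunE.
have [i np_l1] := proj2 path_np l.
case: (eqVneq i j) => [<-|neq_ij].
  exists (fun k => (k == l)%:R); split.
    rewrite np_l1 maddEK big_ord_recr /= eqxx scale1r big1 ?add0r // => k _.
    by rewrite ltn_eqF // scale0r.
  move=> k _; case: eqP => _; rewrite ?normr1 ?normr0 ?exprn_ege1 //.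
  exact: exprn_ge0.
have np_l_j : (0 < np l j)%N.
  by move: np_j; rewrite np_l1 ffunE eq_sym (negbTE neq_ij) addn0.
have [g [Pc g_bounded]] := IH j np_l_j.
rewrite np_l1 msubE_maddE // (NNRR_maddE_swap _ _ j) msubEK // Pc.
set c := msubE (np l) j.
exists (fun k => if k == l then 1 else (b c j - b c i) * g k); split.
  rewrite big_ord_recr /= eqxx scale1r addrC scaler_sumr; congr (_ + _).
  by apply: eq_bigr => k _; rewrite ltn_eqF // scalerA.
move=> k; rewrite ltnS leq_eqVlt => /predU1P[->|lt_kl].
  by rewrite eqxx normr1 subnn.
rewrite ltn_eqF // normrM /= (_ : l - k = (l.-1 - k).+1)%N; last by lia.
rewrite exprS ler_pM ?g_bounded //.
apply: le_trans (ler_normB _ _) _.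
by have := b_bounded c j; have := b_bounded c i; rewrite mulr2n; lra.
Qed.

Variable A : R.
Hypothesis A_ge0 : 0 <= A.
Hypothesis a_bounded : forall l i, (0 < np l i)%N -> `|a (np l) i| <= A.

Lemma mulX_path_expansion l : exists c : nat -> R,
  [/\ 'X * p l = \sum_(k < l.+2) c k *: p k, c l.+1 = 1, `|c l| <= B &
      forall k, (k < l)%N -> `|c k| <= r%:R * A * M ^+ (l.-1 - k)].
Proof.
have [i np_l1] := proj2 path_np l.
have /fin_all_exists [G PG] : forall j : 'I_r, exists g : nat -> R,
    (0 < np l j)%N -> P (msubE (np l) j) = \sum_(k < l) g k *: p k /\
    forall k, (k < l)%N -> `|g k| <= M ^+ (l.-1 - k).
  move=> j; case: (posnP (np l j)) => [_|/msubE_path_expansion [g Pg]].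
    by exists (fun=> 0).
  by exists g.
pose low k := \sum_(j < r | (0 < np l j)%N) a (np l) j * G j k.
have low_sum : \sum_(j < r | (0 < np l j)%N) a (np l) j *: P (msubE (np l) j)
    = \sum_(k < l) low k *: p k.
  under [RHS]eq_bigr do rewrite scaler_suml; rewrite exchange_big.
  apply: eq_bigr => j pos_j; rewrite (proj1 (PG j pos_j)) scaler_sumr.
  by apply: eq_bigr => k _; rewrite scalerA.
exists (fun k => if k == l.+1 then 1 else if k == l then b (np l) i else low k).
split.
- rewrite (recP (np l) i) -np_l1 low_sum !big_ord_recr /= eqxx ltn_eqF // eqxx.
  set S := (X in _ = X + _ + _).
  have -> : S = \sum_(k < l) low k *: p k.
    apply: eq_bigr => k _.
    by rewrite (ltn_eqF (leqW (ltn_ord k))) (ltn_eqF (ltn_ord k)).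
  by rewrite scale1r addrC [_ + b _ _ *: _]addrC addrA.
- by rewrite eqxx.
- by rewrite ltn_eqF // eqxx.
move=> k lt_kl; rewrite (ltn_eqF (leqW lt_kl)) (ltn_eqF lt_kl).
apply: le_trans (ler_norm_sum _ _ _) _.
apply: le_trans (_ : _ <= \sum_(j < r) A * M ^+ (l.-1 - k)) _.
  rewrite big_mkcond; apply: ler_sum => j _; case: ifP => [pos_j|_].
    by rewrite normrM ler_pM ?a_bounded ?(proj2 (PG j pos_j)).
  by rewrite mulr_ge0 ?exprn_ge0.
by rewrite sumr_const card_ord -mulrA mulr_natl.
Qed.

End PathExpansion.

Theorem proposition4 (R : realType) (r : nat) (hr : (0 < r)%N)
  (mu : 'I_r -> {measure set R -> \bar R})
  (P : mindex r -> {poly R}) (a b : mindex r -> 'I_r -> R)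
  (np : nat -> mindex r) (J : nat -> nat -> R) :
  finite_moments mu -> perfect mu -> is_MOP mu P -> NNRR P a b ->
  is_path np -> is_J (fun l => P (np l)) J ->
  (exists A : R, forall (l : nat) (i : 'I_r), (0 < np l i)%N -> `|a (np l) i| <= A) ->
  (exists B : R, forall (n : mindex r) (i : 'I_r), `|b n i| <= B) ->
  forall Rd : nat, exists C : R, forall i j : nat,
    (i <= j + Rd)%N -> (j <= i + Rd)%N -> `|J i j| <= C.
Proof.
move=> _ _ MOP recP path_np J_np [A a_bounded] [B b_bounded] Rd.
have size_P n : size (P n) = (mabs n).+1 by have [_ []] := MOP n.
have a_bounded' l i : (0 < np l i)%N -> `|a (np l) i| <= `|A|.
  by move=> np_i; apply: le_trans (a_bounded l i np_i) (ler_norm _).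
have b_bounded' n i : `|b n i| <= `|B| by apply: le_trans (b_bounded n i) (ler_norm _).
set M := 1 + `|B| *+ 2; have M_ge1 : 1 <= M by rewrite lerDl mulrn_wge0.
have bound_ge0 : 0 <= r%:R * `|A| * M ^+ Rd.
  by rewrite !mulr_ge0 // exprn_ge0 // (le_trans ler01).
exists (1 + `|B| + r%:R * `|A| * M ^+ Rd) => l k le_lk _.
have [lt_l1k|le_kl1] := ltnP l.+1 k.
  by rewrite (proj2 J_np) // normr0; have := normr_ge0 B; lra.
have [c [Xpl c_top c_diag c_low]] :=
  mulX_path_expansion recP path_np (normr_ge0 B) b_bounded' (normr_ge0 A) a_bounded' l.
rewrite (is_J_coefE (size_path size_P path_np) J_np Xpl le_kl1).
case: (ltngtP k l) => [lt_kl|lt_lk|->].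
- apply: le_trans (c_low k lt_kl) _.
  have : r%:R * `|A| * M ^+ (l.-1 - k) <= r%:R * `|A| * M ^+ Rd.
    by rewrite ler_wpM2l ?mulr_ge0 // ler_weXn2l //; lia.
  by have := normr_ge0 B; lra.
- by rewrite (_ : k = l.+1) ?c_top ?normr1; [have := normr_ge0 B; lra | lia].
- by apply: le_trans c_diag _; lra.
Qed.
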